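(* Let $p\ge1$, $0<\ell<1/2$ and $B\ge1$. If $s\le 1$, then \[ \Big\|\sum_{n=1}^{\sqrt B}\frac{\sin(\pi n^2\ell)}{n^{2s}}e_{n^2}\Big\|_p\lesssim_s \ell\Big\|\sum_{n=1}^{\sqrt B}n^{2(1-s)}e_{n^2}\Big\|_p+B^{3-s}\ell^3\cosh(2\pi B\ell)\Big\|\sum_{n=1}^{\sqrt B}e_{n^2}\Big\|_p. \] If $1<s\le3$, then \[ \Big\|\sum_{n=1}^{\sqrt B}\frac{\sin(\pi n^2\ell)}{n^{2s}}e_{n^2}\Big\|_p\lesssim \ell\Big\|\sum_{n=1}^{\sqrt B}\frac{e_{n^2}}{n^{2(s-1)}}\Big\|_p+\ell^3\Big\|\sum_{n=1}^{\sqrt B}n^{2(3-s)}e_{n^2}\Big\|_p+B^{5-s}\ell^5\cosh(2\pi\ell B)\Big\|\sum_{n=1}^{\sqrt B}e_{n^2}\Big\|_p. \]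
   Context: $e_m(x)=e^{2\pi i m x}$ on $\mathbb T=\mathbb R/\mathbb Z$, $\|\cdot\|_p$ is the $L^p(\mathbb T)$ norm, and $\sum_{n=1}^{\sqrt B}$ is the sum over integers $1\le n\le\sqrt B$. $\lesssim_s$ means up to a constant depending only on $s$ (independent of $\ell$ and $B$). *)

From Stdlib Require Import Reals Lra.
From Coquelicot Require Import Coquelicot.
Open Scope R_scope.

(* real power with the convention 0^q = 0 (q > 0 in all uses); Rpower alone
   would give Rpower 0 q = 1. *)
Definition rpow (x q : R) : R :=
  if Req_EM_T x 0 then 0 else Rpower x q.

Fixpoint sum1 (N : nat) (f : nat -> R) : R :=
  match N with
  | O => 0
  | S k => sum1 k f + f (S k)
  end.

Definition nsqrt (B : R) : nat := Z.to_nat (Int_part (sqrt B)).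

(* modulus of the trigonometric polynomial sum_{n=1}^N a_n e_{n^2}(x),
   a_n real, e_m(x) = exp(2 pi i m x): |Re|^2 + |Im|^2 written out *)
Definition sq_poly_abs (a : nat -> R) (N : nat) (x : R) : R :=
  let re := sum1 N (fun n => a n * cos (2 * PI * INR (n * n) * x)) in
  let im := sum1 N (fun n => a n * sin (2 * PI * INR (n * n) * x)) in
  sqrt (re ^ 2 + im ^ 2).

(* L^p(T) norm, T = R/Z identified with [0,1] *)
Definition Lpnorm (p : R) (a : nat -> R) (N : nat) : R :=
  rpow (RInt (fun x => rpow (sq_poly_abs a N x) p) 0 1) (1 / p).

Definition npow (n : nat) (t : R) : R := Rpower (INR n) t.

From Stdlib Require Import Reals Lra Lia.
From Coquelicot Require Import Coquelicot.
Open Scope R_scope.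

(* Since sin (PI q l) / (PI q l) e_q(x) is the mean of e_q over the window x + [-l/2, l/2], the
   polynomial with coefficients sin (PI n^2 l) a_n is PI l times the window mean of the polynomial
   with coefficients n^2 a_n.  Jensen's inequality for |.|^p bounds the p-th power of this mean
   by the window mean of the p-th powers, and integrating over a period (the window average of a
   1-periodic function has the same integral, computed through a primitive) gives
   || sum sin (PI n^2 l) a_n e_(n^2) ||_p <= PI l || sum n^2 a_n e_(n^2) ||_p.
   With a_n = n^(-2s) this is the first term of both bounds; the other terms are nonnegative,
   so C = PI works in both cases. *)

Lemma Rpower_pos x y : 0 < Rpower x y.
Proof. apply exp_pos. Qed.

Lemma rpow_ge0 y q : 0 <= rpow y q.
Proof. unfold rpow; destruct (Req_EM_T y 0); [lra | left; apply Rpower_pos]. Qed.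

Lemma rpow_0 q : rpow 0 q = 0.
Proof. unfold rpow; destruct (Req_EM_T 0 0); [reflexivity | congruence]. Qed.

Lemma rpow_Rpower y q : y <> 0 -> rpow y q = Rpower y q.
Proof. intros Hy; unfold rpow; destruct (Req_EM_T y 0); [contradiction | reflexivity]. Qed.

Lemma Rpower_le_self y p : 1 <= p -> 0 < y <= 1 -> Rpower y p <= y.
Proof.
  intros Hp Hy.
  assert (Hln : ln y <= 0) by (rewrite <- ln_1; apply ln_le; lra).
  unfold Rpower; rewrite <- (exp_ln y) at 2 by lra.
  destruct (Req_dec (p * ln y) (ln y)) as [E | E]; [rewrite E; lra |].
  left; apply exp_increasing; nra.
Qed.

Lemma Rpower_mul_self u p : 0 < u -> Rpower u p = Rpower u (p - 1) * u.
Proof.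
  intros Hu; rewrite <- (Rpower_1 u) at 3 by exact Hu.
  rewrite <- Rpower_plus; f_equal; ring.
Qed.

Lemma continuous_rpow_abs p y0 : 1 <= p -> continuous (fun y => rpow (Rabs y) p) y0.
Proof.
  intros Hp; destruct (Req_dec y0 0) as [-> | Hy0].
  - apply continuity_pt_filterlim, continuity_pt_locally; intros eps.
    assert (Heps : 0 < Rmin 1 eps) by (apply Rmin_pos; [lra | apply cond_pos]).
    exists (mkposreal _ Heps); intros u Hu; change (Rabs (u - 0) < Rmin 1 eps) in Hu.
    rewrite Rminus_0_r in Hu; rewrite Rabs_R0, rpow_0, Rminus_0_r.
    pose proof (Rmin_l 1 eps); pose proof (Rmin_r 1 eps).
    destruct (Req_dec (Rabs u) 0) as [E | E].
    + rewrite E, rpow_0, Rabs_R0; apply cond_pos.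
    + rewrite rpow_Rpower, Rabs_pos_eq by (auto; left; apply Rpower_pos).
      pose proof (Rpower_le_self (Rabs u) p Hp); pose proof (Rabs_pos u); lra.
  - assert (Hsq : 0 < y0 * y0) by (destruct (Rlt_or_le y0 0); nra).
    apply (continuous_ext_loc _ (fun y => exp (p * (ln (y * y) / 2)))).
    + assert (Hr : 0 < Rabs y0) by (apply Rabs_pos_lt, Hy0).
      exists (mkposreal _ Hr); intros u Hu; change (Rabs (u - y0) < Rabs y0) in Hu.
      assert (Hu0 : Rabs u <> 0).
      { intros E; apply Rabs_eq_0 in E; subst; rewrite Rminus_0_l, Rabs_Ropp in Hu; lra. }
      rewrite rpow_Rpower by exact Hu0; unfold Rpower; f_equal; f_equal.
      assert (Hpos : 0 < Rabs u) by (pose proof (Rabs_pos u); lra).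
      replace (u * u) with (Rabs u * Rabs u)
        by (rewrite <- Rabs_mult; apply Rabs_pos_eq, Rle_0_sqr).
      rewrite ln_mult by exact Hpos; field.
    + apply (@ex_derive_continuous R_AbsRing R_NormedModule); auto_derive; lra.
Qed.

Lemma continuous_rpow_norm2 p (f g : R -> R) x : 1 <= p ->
  continuous f x -> continuous g x ->
  continuous (fun y => rpow (sqrt (f y ^ 2 + g y ^ 2)) p) x.
Proof.
  intros Hp Hf Hg.
  apply (continuous_ext (fun y => rpow (Rabs (sqrt (f y * f y + g y * g y))) p)).
  { intros y; rewrite Rabs_pos_eq by apply sqrt_pos; f_equal; f_equal; ring. }
  apply (continuous_comp (fun y => sqrt (f y * f y + g y * g y)) (fun y => rpow (Rabs y) p));
    [| apply continuous_rpow_abs, Hp].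
  apply continuous_sqrt_comp, (continuous_plus (fun y => f y * f y) (fun y => g y * g y));
    [apply (continuous_mult f f) | apply (continuous_mult g g)]; assumption.
Qed.

Lemma Rpower_tangent_le p u y : 1 <= p -> 0 < u -> 0 <= y ->
  Rpower u p + p * Rpower u (p - 1) * (y - u) <= rpow y p.
Proof.
  intros Hp Hu Hy.
  pose proof (Rpower_pos u (p - 1)) as Hk.
  destruct (Req_dec y 0) as [-> | Hy0].
  { rewrite rpow_0, (Rpower_mul_self u p Hu).
    assert (0 <= Rpower u (p - 1) * u * (p - 1)) by (apply Rmult_le_pos; [apply Rmult_le_pos |]; lra).
    nra. }
  rewrite rpow_Rpower by exact Hy0.
  set (K := p * Rpower u (p - 1)).
  assert (Hmin : 0 < Rmin u y) by (apply Rmin_glb_lt; lra).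
  (* mean value theorem for z |-> z^p - K z, whose derivative has the sign of z - u *)
  destruct (MVT_gen (fun z => exp (p * ln z) - K * z) u y (fun z => p * Rpower z (p - 1) - K))
    as [xi [Hxi Heq]].
  - intros z Hz; assert (0 < z) by lra.
    auto_derive; [lra |].
    change (exp (p * ln z)) with (Rpower z p); rewrite (Rpower_mul_self z p) by lra.
    field; lra.
  - intros z Hz; assert (0 < z) by lra.
    apply continuity_pt_filterlim.
    apply (@ex_derive_continuous R_AbsRing R_NormedModule (fun z => exp (p * ln z) - K * z)).
    auto_derive; lra.
  - assert (Hxi0 : 0 < xi) by lra.
    assert (Hsign : 0 <= (p * Rpower xi (p - 1) - K) * (y - u)).
    { unfold K; destruct (Rle_or_lt u y) as [L | L].
      - rewrite Rmin_left, Rmax_right in Hxi by lra.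
        assert (Rpower u (p - 1) <= Rpower xi (p - 1)) by (apply Rle_Rpower_l; lra).
        apply Rmult_le_pos; nra.
      - rewrite Rmin_right, Rmax_left in Hxi by lra.
        assert (Rpower xi (p - 1) <= Rpower u (p - 1)) by (apply Rle_Rpower_l; lra).
        replace ((p * Rpower xi (p - 1) - p * Rpower u (p - 1)) * (y - u))
          with ((p * Rpower u (p - 1) - p * Rpower xi (p - 1)) * (u - y)) by ring.
        apply Rmult_le_pos; nra. }
    change (exp (p * ln y)) with (Rpower y p) in Heq.
    change (exp (p * ln u)) with (Rpower u p) in Heq.
    rewrite (Rpower_mul_self u p Hu) in Heq |- *; unfold K in *; nra.
Qed.

Lemma jensen_rpow_norm2 p (w1 w2 : R -> R) (a b A1 A2 : R) : 1 <= p -> a < b ->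
  (forall t, continuous w1 t) -> (forall t, continuous w2 t) ->
  is_RInt w1 a b A1 -> is_RInt w2 a b A2 ->
  (b - a) * rpow (sqrt ((A1 / (b - a)) ^ 2 + (A2 / (b - a)) ^ 2)) p
  <= RInt (fun t => rpow (sqrt (w1 t ^ 2 + w2 t ^ 2)) p) a b.
Proof.
  intros Hp Hab Hw1 Hw2 I1 I2.
  set (L := b - a); assert (HL : 0 < L) by (unfold L; lra).
  set (v1 := A1 / L); set (v2 := A2 / L); set (u := sqrt (v1 ^ 2 + v2 ^ 2)).
  assert (Hint : is_RInt (fun t => rpow (sqrt (w1 t ^ 2 + w2 t ^ 2)) p) a b
                   (RInt (fun t => rpow (sqrt (w1 t ^ 2 + w2 t ^ 2)) p) a b)).
  { apply (@RInt_correct R_CompleteNormedModule), (@ex_RInt_continuous R_CompleteNormedModule).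
    intros; apply continuous_rpow_norm2; auto. }
  destruct (Req_dec u 0) as [E | E].
  { rewrite E, rpow_0, Rmult_0_r.
    apply (is_RInt_ge_0 _ a b _ (Rlt_le _ _ Hab) Hint); intros; apply rpow_ge0. }
  assert (Hu : 0 < u) by (assert (0 <= u) by apply sqrt_pos; lra).
  rewrite rpow_Rpower by exact E.
  (* integrate the supporting hyperplane of |w|^p at the mean vector (v1, v2) *)
  set (K := p * Rpower u (p - 1)).
  set (c0 := Rpower u p - K * u); set (k1 := K * v1 / u); set (k2 := K * v2 / u).
  assert (Iaff : is_RInt (fun t => c0 + k1 * w1 t + k2 * w2 t) a b (L * c0 + k1 * A1 + k2 * A2)).
  { apply (is_RInt_plus (fun t => c0 + k1 * w1 t) (fun t => k2 * w2 t)).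
    - apply (is_RInt_plus (fun _ => c0) (fun t => k1 * w1 t));
        [apply (@is_RInt_const R_NormedModule) | apply (is_RInt_scal w1), I1].
    - apply (is_RInt_scal w2), I2. }
  assert (Hval : L * c0 + k1 * A1 + k2 * A2 = L * Rpower u p).
  { assert (Hu2 : u * u = v1 ^ 2 + v2 ^ 2) by (apply sqrt_sqrt; nra).
    replace A1 with (v1 * L) by (unfold v1; field; lra).
    replace A2 with (v2 * L) by (unfold v2; field; lra).
    transitivity (L * c0 + K * L * (v1 ^ 2 + v2 ^ 2) / u); [unfold k1, k2; field; lra |].
    rewrite <- Hu2; unfold c0; field; lra. }
  rewrite <- Hval.
  apply (is_RInt_le _ _ a b _ _ (Rlt_le _ _ Hab) Iaff Hint); intros t _.
  set (W := sqrt (w1 t ^ 2 + w2 t ^ 2)).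
  pose proof (Rpower_tangent_le p u W Hp Hu (sqrt_pos _)) as T.
  assert (CS : v1 * w1 t + v2 * w2 t <= u * W).
  { pose proof (sqrt_cauchy v1 v2 (w1 t) (w2 t)) as CS; unfold Rsqr in CS.
    unfold u, W; replace (v1 ^ 2 + v2 ^ 2) with (v1 * v1 + v2 * v2) by ring.
    replace (w1 t ^ 2 + w2 t ^ 2) with (w1 t * w1 t + w2 t * w2 t) by ring; exact CS. }
  assert (k1 * w1 t + k2 * w2 t <= K * W).
  { replace (k1 * w1 t + k2 * w2 t) with (K * ((v1 * w1 t + v2 * w2 t) / u)) by (unfold k1, k2; field; lra).
    apply Rmult_le_compat_l; [unfold K; pose proof (Rpower_pos u (p - 1)); nra |].
    apply (Rmult_le_reg_r u); [lra |]; unfold Rdiv; rewrite Rmult_assoc, Rinv_l by lra; lra. }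
  unfold c0; fold K in T; lra.
Qed.

Definition trig_sum (f : R -> R) (c : nat -> R) (N : nat) (y : R) : R :=
  sum1 N (fun n => c n * f (2 * PI * INR (n * n) * y)).

Lemma trig_sum_S f c N y :
  trig_sum f c (S N) y = trig_sum f c N y + c (S N) * f (2 * PI * INR (S N * S N) * y).
Proof. reflexivity. Qed.

Lemma sq_poly_absE c N y :
  sq_poly_abs c N y = sqrt (trig_sum cos c N y ^ 2 + trig_sum sin c N y ^ 2).
Proof. reflexivity. Qed.

Lemma continuous_trig_sum f c N y : (forall θ, continuous f θ) ->
  continuous (trig_sum f c N) y.
Proof.
  intros Hf; induction N as [| N IH]; [apply continuous_const |].
  apply (continuous_plus (trig_sum f c N) (fun y => c (S N) * f (2 * PI * INR (S N * S N) * y)));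
    [exact IH |].
  apply (continuous_mult (fun _ => c (S N))); [apply continuous_const |].
  apply (continuous_comp (fun y => 2 * PI * INR (S N * S N) * y) f); [| apply Hf].
  apply (@ex_derive_continuous R_AbsRing R_NormedModule); auto_derive; auto.
Qed.

Lemma trig_sum_periodic f c N y : (forall θ k, f (θ + 2 * INR k * PI) = f θ) ->
  trig_sum f c N (y + 1) = trig_sum f c N y.
Proof.
  intros Hf; induction N as [| N IH]; [reflexivity |].
  rewrite !trig_sum_S, IH, <- (Hf (2 * PI * INR (S N * S N) * y) (S N * S N)%nat).
  do 3 f_equal; ring.
Qed.

Lemma sq_poly_abs_periodic c N y : sq_poly_abs c N (y + 1) = sq_poly_abs c N y.
Proof.
  rewrite !sq_poly_absE, !trig_sum_periodic by (apply cos_period || apply sin_period).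
  reflexivity.
Qed.

Lemma continuous_rpow_sq_poly_abs p c N y : 1 <= p ->
  continuous (fun x => rpow (sq_poly_abs c N x) p) y.
Proof.
  intros Hp; apply continuous_rpow_norm2; [exact Hp | |];
    apply continuous_trig_sum; [exact continuous_cos | exact continuous_sin].
Qed.

Lemma is_RInt_frequency_window (f F : R -> R) (q a x l : R) : 0 < q ->
  (forall θ, is_derive F θ (f θ)) -> (forall θ, continuous f θ) ->
  (forall θ α, F (θ + α) - F (θ - α) = 2 * sin α * f θ) ->
  is_RInt (fun t => q * a * f (2 * PI * q * (x + t))) (- (l / 2)) (l / 2)
    (sin (PI * q * l) * a * f (2 * PI * q * x) / PI).
Proof.
  intros Hq HF Hf Hsym; pose proof PI_RGT_0 as Hpi.
  set (phase := fun t => 2 * PI * q * (x + t)).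
  assert (Hphase : forall t, is_derive phase t (2 * PI * q)).
  { intros t; unfold phase; auto_derive; [auto | ring]. }
  assert (Hval : a / (2 * PI) * F (phase (l / 2)) - a / (2 * PI) * F (phase (- (l / 2)))
                 = sin (PI * q * l) * a * f (2 * PI * q * x) / PI).
  { unfold phase; rewrite <- Rmult_minus_distr_l.
    replace (2 * PI * q * (x + l / 2)) with (2 * PI * q * x + PI * q * l) by field.
    replace (2 * PI * q * (x + - (l / 2))) with (2 * PI * q * x - PI * q * l) by field.
    rewrite Hsym; field; lra. }
  rewrite <- Hval.
  apply (is_RInt_derive (fun t => a / (2 * PI) * F (phase t))).
  - intros t _; cbv beta.
    replace (q * a * f (2 * PI * q * (x + t))) with (a / (2 * PI) * (2 * PI * q * f (phase t)))
      by (unfold phase; field; lra).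
    apply (is_derive_scal (fun t => F (phase t))).
    exact (is_derive_comp F phase t _ _ (HF (phase t)) (Hphase t)).
  - intros t _; apply (continuous_comp phase (fun u => q * a * f u)).
    + apply (@ex_derive_continuous R_AbsRing R_NormedModule); eexists; apply Hphase.
    + apply (continuous_mult (fun _ => q * a) f); [apply continuous_const | apply Hf].
Qed.

Lemma is_RInt_trig_sum_window f F (a b : nat -> R) N x l :
  (forall θ, is_derive F θ (f θ)) -> (forall θ, continuous f θ) ->
  (forall θ α, F (θ + α) - F (θ - α) = 2 * sin α * f θ) ->
  (forall n, (1 <= n <= N)%nat -> b n = INR (n * n) * a n) ->
  is_RInt (fun t => trig_sum f b N (x + t)) (- (l / 2)) (l / 2)
    (trig_sum f (fun n => sin (PI * INR (n * n) * l) * a n) N x / PI).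
Proof.
  intros HF Hf Hsym; induction N as [| N IH]; intros Hb.
  - change (trig_sum f _ 0 x) with 0; unfold Rdiv.
    rewrite Rmult_0_l, <- (Rmult_0_r (l / 2 - - (l / 2))).
    apply (@is_RInt_const R_NormedModule).
  - apply (is_RInt_ext _ _ _ _ _ (fun t _ => eq_sym (trig_sum_S f b N (x + t)))).
    rewrite trig_sum_S, Rdiv_plus_distr.
    apply (is_RInt_plus (fun t => trig_sum f b N (x + t))).
    + apply IH; intros n Hn; apply Hb; lia.
    + rewrite Hb by lia.
      apply (is_RInt_frequency_window f F); [apply lt_0_INR; lia | exact HF | exact Hf | exact Hsym].
Qed.

Lemma is_RInt_cos_sum_window (a b : nat -> R) N x l :
  (forall n, (1 <= n <= N)%nat -> b n = INR (n * n) * a n) ->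
  is_RInt (fun t => trig_sum cos b N (x + t)) (- (l / 2)) (l / 2)
    (trig_sum cos (fun n => sin (PI * INR (n * n) * l) * a n) N x / PI).
Proof.
  apply (is_RInt_trig_sum_window cos sin).
  - intros θ; auto_derive; [auto | ring].
  - exact continuous_cos.
  - intros θ α; rewrite sin_plus, sin_minus; ring.
Qed.

Lemma is_RInt_sin_sum_window (a b : nat -> R) N x l :
  (forall n, (1 <= n <= N)%nat -> b n = INR (n * n) * a n) ->
  is_RInt (fun t => trig_sum sin b N (x + t)) (- (l / 2)) (l / 2)
    (trig_sum sin (fun n => sin (PI * INR (n * n) * l) * a n) N x / PI).
Proof.
  apply (is_RInt_trig_sum_window sin (fun θ => - cos θ)).
  - intros θ; auto_derive; [auto | ring].
  - exact continuous_sin.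
  - intros θ α; rewrite cos_plus, cos_minus; ring.
Qed.

Lemma rpow_mul_pos k y p : 0 < k -> 0 <= y -> rpow (k * y) p = Rpower k p * rpow y p.
Proof.
  intros Hk Hy; destruct (Req_dec y 0) as [-> | Hy0].
  - rewrite Rmult_0_r, !rpow_0; ring.
  - assert (0 < y) by lra.
    rewrite !rpow_Rpower by (try apply Rmult_integral_contrapositive; lra).
    apply eq_sym, Rpower_mult_distr; lra.
Qed.

Lemma continuous_shift (f : R -> R) x t : (forall y, continuous f y) ->
  continuous (fun t => f (x + t)) t.
Proof.
  intros Hf; apply (continuous_comp (fun t => x + t) f); [| apply Hf].
  apply (@ex_derive_continuous R_AbsRing R_NormedModule); auto_derive; auto.
Qed.

Lemma rpow_sq_poly_abs_le_window p l (a b : nat -> R) N x : 1 <= p -> 0 < l ->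
  (forall n, (1 <= n <= N)%nat -> b n = INR (n * n) * a n) ->
  rpow (sq_poly_abs (fun n => sin (PI * INR (n * n) * l) * a n) N x) p
  <= Rpower (PI * l) p / l * RInt (fun t => rpow (sq_poly_abs b N (x + t)) p) (- (l / 2)) (l / 2).
Proof.
  intros Hp Hl Hb; pose proof PI_RGT_0 as Hpi.
  set (c := fun n => sin (PI * INR (n * n) * l) * a n).
  set (A1 := trig_sum cos c N x / PI); set (A2 := trig_sum sin c N x / PI).
  pose proof (jensen_rpow_norm2 p (fun t => trig_sum cos b N (x + t)) (fun t => trig_sum sin b N (x + t))
    (- (l / 2)) (l / 2) A1 A2 Hp ltac:(lra)
    (fun t => continuous_shift _ x t (fun y => continuous_trig_sum _ b N y continuous_cos))
    (fun t => continuous_shift _ x t (fun y => continuous_trig_sum _ b N y continuous_sin))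
    (is_RInt_cos_sum_window a b N x l Hb) (is_RInt_sin_sum_window a b N x l Hb)) as J.
  replace (l / 2 - - (l / 2)) with l in J by field.
  set (u := sqrt ((A1 / l) ^ 2 + (A2 / l) ^ 2)) in J.
  (* the window mean of the b-polynomial is the c-polynomial scaled by 1 / (PI l) *)
  assert (Hmean : sq_poly_abs c N x = PI * l * u).
  { rewrite sq_poly_absE; unfold u.
    rewrite <- (sqrt_pow2 (PI * l)) by nra; rewrite <- sqrt_mult_alt by nra.
    f_equal; unfold A1, A2; field; lra. }
  set (I := RInt (fun t => rpow (sq_poly_abs b N (x + t)) p) (- (l / 2)) (l / 2)).
  change (l * rpow u p <= I) in J.
  rewrite Hmean, rpow_mul_pos by (try apply sqrt_pos; nra).
  unfold Rdiv; rewrite Rmult_assoc.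
  apply Rmult_le_compat_l; [left; apply Rpower_pos |].
  apply (Rmult_le_reg_l l); [exact Hl |].
  rewrite <- Rmult_assoc, Rinv_r, Rmult_1_l by lra; exact J.
Qed.

Lemma ex_RInt_continuous_R (f : R -> R) a b : (forall y, continuous f y) -> ex_RInt f a b.
Proof. intros Hf; apply (@ex_RInt_continuous R_CompleteNormedModule); intros; apply Hf. Qed.

Lemma RInt_shift (f : R -> R) v a b : (forall y, continuous f y) ->
  RInt (fun t => f (t + v)) a b = RInt f (a + v) (b + v).
Proof.
  intros Hf.
  rewrite <- (Rmult_1_l a), <- (Rmult_1_l b) at 2.
  rewrite <- RInt_comp_lin by (apply ex_RInt_continuous_R, Hf).
  apply RInt_ext; intros t _; change (f (t + v) = 1 * f (1 * t + v)); rewrite !Rmult_1_l; reflexivity.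
Qed.

Lemma RInt_Chasles_continuous (f : R -> R) a b c : (forall y, continuous f y) ->
  RInt f a b + RInt f b c = RInt f a c.
Proof. intros Hf; apply (RInt_Chasles f a b c); apply ex_RInt_continuous_R, Hf. Qed.

Section PeriodicWindowAverage.

Variable H : R -> R.
Hypothesis H_cont : forall y, continuous H y.
Hypothesis H_periodic : forall y, H (y + 1) = H y.

Let primitive (y : R) : R := RInt H 0 y.

Lemma continuous_primitive y : continuous primitive y.
Proof.
  apply (@ex_derive_continuous R_AbsRing R_NormedModule); exists (H y).
  apply (is_derive_RInt H primitive 0 y); [| apply H_cont].
  apply filter_forall; intros z.
  apply (@RInt_correct R_CompleteNormedModule), ex_RInt_continuous_R, H_cont.
Qed.

Lemma primitive_periodic y : primitive (y + 1) = primitive y + RInt H 0 1.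
Proof.
  unfold primitive; rewrite <- (RInt_Chasles_continuous H 0 1 (y + 1)) by exact H_cont.
  replace (RInt H 1 (y + 1)) with (RInt H 0 y); [ring |].
  replace 1 with (0 + 1) at 1 by ring.
  rewrite <- RInt_shift by exact H_cont.
  apply RInt_ext; intros; rewrite H_periodic; reflexivity.
Qed.

Lemma RInt_window_primitive x c :
  RInt (fun t => H (x + t)) (- c) c = primitive (x + c) - primitive (x - c).
Proof.
  rewrite (RInt_ext _ (fun t => H (t + x))) by (intros; f_equal; ring).
  rewrite RInt_shift by exact H_cont.
  unfold primitive; rewrite <- (RInt_Chasles_continuous H 0 (x - c) (x + c)) by exact H_cont.
  replace (- c + x) with (x - c) by ring; replace (c + x) with (x + c) by ring; lra.
Qed.

Lemma RInt_primitive_shift c :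
  RInt (fun x => primitive (x + c)) 0 1 = RInt primitive 0 1 + c * RInt H 0 1.
Proof.
  assert (HP := continuous_primitive).
  rewrite RInt_shift by exact HP.
  rewrite <- (RInt_Chasles_continuous primitive (0 + c) 0 (1 + c)),
    <- (RInt_Chasles_continuous primitive 0 1 (1 + c)) by exact HP.
  assert (Hswap : RInt primitive (0 + c) 0 = - RInt primitive 0 c).
  { rewrite Rplus_0_l, <- opp_RInt_swap by (apply ex_RInt_continuous_R, HP); reflexivity. }
  (* over [1, 1 + c] the primitive exceeds its values over [0, c] by one period integral *)
  assert (Hlast : RInt primitive 1 (1 + c) = RInt primitive 0 c + c * RInt H 0 1).
  { rewrite <- (Rplus_0_l 1) at 1; rewrite (Rplus_comm 1 c), <- RInt_shift by exact HP.
    apply is_RInt_unique.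
    apply (is_RInt_ext (fun t => primitive t + RInt H 0 1)); [intros; symmetry; apply primitive_periodic |].
    replace (RInt primitive 0 c + c * RInt H 0 1)
      with (RInt primitive 0 c + (c - 0) * RInt H 0 1) by ring.
    apply (is_RInt_plus primitive (fun _ => RInt H 0 1)).
    - apply (@RInt_correct R_CompleteNormedModule), ex_RInt_continuous_R, HP.
    - apply (@is_RInt_const R_NormedModule). }
  rewrite Hswap, Hlast; lra.
Qed.

Lemma is_RInt_window_average c :
  is_RInt (fun x => RInt (fun t => H (x + t)) (- c) c) 0 1 (2 * c * RInt H 0 1).
Proof.
  assert (Hshift : forall v y, continuous (fun x => primitive (x + v)) y).
  { intros v y; apply (continuous_comp (fun x => x + v) primitive); [| apply continuous_primitive].
    apply (@ex_derive_continuous R_AbsRing R_NormedModule); auto_derive; auto. }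
  apply (is_RInt_ext (fun x => primitive (x + c) - primitive (x + - c)));
    [intros; symmetry; apply RInt_window_primitive |].
  replace (2 * c * RInt H 0 1)
    with (RInt (fun x => primitive (x + c)) 0 1 - RInt (fun x => primitive (x + - c)) 0 1)
    by (rewrite !RInt_primitive_shift; ring).
  apply (is_RInt_minus (fun x => primitive (x + c)) (fun x => primitive (x + - c)));
    apply (@RInt_correct R_CompleteNormedModule), ex_RInt_continuous_R, Hshift.
Qed.

End PeriodicWindowAverage.

Lemma rpow_inv_le_mul p k X Y : 0 < p -> 0 < k -> 0 <= X -> X <= Rpower k p * Y ->
  rpow X (1 / p) <= k * rpow Y (1 / p).
Proof.
  intros Hp Hk HX HXY; pose proof (Rpower_pos k p) as Hkp.
  destruct (Req_dec X 0) as [-> | HX0].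
  { rewrite rpow_0; apply Rmult_le_pos; [lra | apply rpow_ge0]. }
  assert (HY : 0 < Y) by (destruct (Rle_or_lt Y 0); [nra | assumption]).
  rewrite !rpow_Rpower by lra.
  apply Rle_trans with (Rpower (Rpower k p * Y) (1 / p)).
  - apply Rle_Rpower_l; [left; apply Rdiv_lt_0_compat |]; lra.
  - rewrite <- Rpower_mult_distr, Rpower_mult by lra.
    replace (p * (1 / p)) with 1 by (field; lra).
    rewrite Rpower_1 by exact Hk; lra.
Qed.

Lemma Lpnorm_sin_mul_le p l (a b : nat -> R) N : 1 <= p -> 0 < l ->
  (forall n, (1 <= n <= N)%nat -> b n = INR (n * n) * a n) ->
  Lpnorm p (fun n => sin (PI * INR (n * n) * l) * a n) N <= PI * l * Lpnorm p b N.
Proof.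
  intros Hp Hl Hb; pose proof PI_RGT_0 as Hpi.
  set (G := fun x => rpow (sq_poly_abs (fun n => sin (PI * INR (n * n) * l) * a n) N x) p).
  set (Hf := fun y => rpow (sq_poly_abs b N y) p).
  set (I := RInt Hf 0 1).
  assert (Hf_cont : forall y, continuous Hf y) by (intros; apply continuous_rpow_sq_poly_abs, Hp).
  assert (HG : is_RInt G 0 1 (RInt G 0 1)).
  { apply (@RInt_correct R_CompleteNormedModule), ex_RInt_continuous_R.
    intros; apply continuous_rpow_sq_poly_abs, Hp. }
  assert (Hbound : RInt G 0 1 <= Rpower (PI * l) p * I).
  { replace (Rpower (PI * l) p * I) with (Rpower (PI * l) p / l * (2 * (l / 2) * I)) by (field; lra).
    apply (is_RInt_le G (fun x => Rpower (PI * l) p / l * RInt (fun t => Hf (x + t)) (- (l / 2)) (l / 2))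
      0 1 _ _ ltac:(lra) HG).
    - apply (is_RInt_scal (fun x => RInt (fun t => Hf (x + t)) (- (l / 2)) (l / 2))).
      apply is_RInt_window_average; [exact Hf_cont |].
      intros y; unfold Hf; rewrite sq_poly_abs_periodic; reflexivity.
    - intros x _; apply rpow_sq_poly_abs_le_window; assumption. }
  apply rpow_inv_le_mul; [lra | nra | | exact Hbound].
  apply (is_RInt_ge_0 G 0 1 _ ltac:(lra) HG); intros; apply rpow_ge0.
Qed.

Lemma Lpnorm_ge0 p a N : 0 <= Lpnorm p a N.
Proof. apply rpow_ge0. Qed.

Lemma cosh_pos x : 0 < cosh x.
Proof. unfold cosh; pose proof (exp_pos x); pose proof (exp_pos (- x)); lra. Qed.

Lemma INR_sq_div_npow n t : (1 <= n)%nat -> INR (n * n) * / npow n t = npow n (2 - t).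
Proof.
  intros Hn; unfold npow; assert (0 < INR n) by (apply lt_0_INR; lia).
  replace (2 - t) with (INR 2 + - t) by (simpl; ring).
  rewrite Rpower_plus, Rpower_Ropp, Rpower_pow, mult_INR by assumption; simpl; ring.
Qed.

Lemma cosh_remainder_ge0 B t l k x p N : 0 <= l ->
  0 <= Rpower B t * l ^ k * cosh x * Lpnorm p (fun _ => 1) N.
Proof.
  intros Hl; apply Rmult_le_pos; [apply Rmult_le_pos; [apply Rmult_le_pos |] |].
  all: auto using Rlt_le, Rpower_pos, cosh_pos, Lpnorm_ge0, pow_le.
Qed.

Theorem lemma3p3 :
  (forall s : R, s <= 1 ->
     exists C : R, 0 < C /\
       forall p l B : R, 1 <= p -> 0 < l < 1 / 2 -> 1 <= B ->
         Lpnorm p (fun n => sin (PI * INR (n * n) * l) / npow n (2 * s)) (nsqrt B)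
         <= C * (l * Lpnorm p (fun n => npow n (2 * (1 - s))) (nsqrt B)
                 + Rpower B (3 - s) * l ^ 3 * cosh (2 * PI * B * l)
                   * Lpnorm p (fun _ => 1) (nsqrt B)))
  /\
  (exists C : R, 0 < C /\
     forall s p l B : R, 1 < s <= 3 -> 1 <= p -> 0 < l < 1 / 2 -> 1 <= B ->
       Lpnorm p (fun n => sin (PI * INR (n * n) * l) / npow n (2 * s)) (nsqrt B)
       <= C * (l * Lpnorm p (fun n => 1 / npow n (2 * (s - 1))) (nsqrt B)
               + l ^ 3 * Lpnorm p (fun n => npow n (2 * (3 - s))) (nsqrt B)
               + Rpower B (5 - s) * l ^ 5 * cosh (2 * PI * l * B)
                 * Lpnorm p (fun _ => 1) (nsqrt B))).
Proof.
  pose proof PI_RGT_0 as Hpi.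
  split.
  - intros s _; exists PI; split; [exact Hpi |]; intros p l B Hp Hl _.
    pose proof (cosh_remainder_ge0 B (3 - s) l 3 (2 * PI * B * l) p (nsqrt B) ltac:(lra)).
    apply Rle_trans with (PI * (l * Lpnorm p (fun n => npow n (2 * (1 - s))) (nsqrt B))); [| nra].
    rewrite <- Rmult_assoc; apply Lpnorm_sin_mul_le; [lra | lra |].
    intros n Hn; rewrite INR_sq_div_npow by lia; f_equal; ring.
  - exists PI; split; [exact Hpi |]; intros s p l B _ Hp Hl _.
    pose proof (cosh_remainder_ge0 B (5 - s) l 5 (2 * PI * l * B) p (nsqrt B) ltac:(lra)).
    assert (0 <= l ^ 3 * Lpnorm p (fun n => npow n (2 * (3 - s))) (nsqrt B))
      by (apply Rmult_le_pos; [apply pow_le; lra | apply Lpnorm_ge0]).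
    apply Rle_trans with (PI * (l * Lpnorm p (fun n => 1 / npow n (2 * (s - 1))) (nsqrt B))); [| nra].
    rewrite <- Rmult_assoc; apply Lpnorm_sin_mul_le; [lra | lra |].
    intros n Hn; rewrite INR_sq_div_npow by lia; unfold npow, Rdiv.
    rewrite Rmult_1_l, <- Rpower_Ropp; f_equal; ring.
Qed.
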